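(* Let $1\le k<n$ and let $C_k=[c_{ij}]_{i,j=1}^k$ be the upper-left $k\times k$ submatrix of an incomplete $n\times n$ pairwise comparison matrix, with $s_i$ the number of missing entries in the $i$-th row of $C_k$. Let $A_k$ be the $k\times k$ matrix with diagonal entries $(A_k)_{ii}=n-s_i-1$ and off-diagonal entries $(A_k)_{ij}=-1$ if $c_{ij}$ is known and $(A_k)_{ij}=0$ if $c_{ij}=?$. Then $A_k$ is invertible; hence the geometric incomplete HRE system $A_k\widehat w=b$ has a unique solution for every $b\in\mathbb{R}^k$.
   Context: An incomplete pairwise comparison matrix has entries either positive reals or unknown, written $c_{ij}=c_{ji}=?$, with known entries satisfying $c_{ii}=1$ and $c_{ij}=1/c_{ji}$. In the geometric HRE method $\widehat w$ is the vector of logarithms of the unknown weights of $a_1,\dots,a_k$, and $b$ depends on the known comparisons and reference weights. *)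

From HB Require Import structures.
From mathcomp Require Import all_boot all_order all_algebra.
Set Implicit Arguments. Unset Strict Implicit. Unset Printing Implicit Defensive.
Import Order.TTheory GRing.Theory Num.Theory.
Local Open Scope ring_scope.

(* An incomplete pairwise comparison matrix: entries are [Some c] (known,
   positive real) or [None] (unknown, written "?"). *)
Definition is_incomplete_PCM (R : realFieldType) (n : nat)
    (C : 'M[option R]_n) : Prop :=
  (forall i : 'I_n, C i i = Some 1) /\
  (forall i j : 'I_n, C i j = None <-> C j i = None) /\
  (forall (i j : 'I_n) (x : R), C i j = Some x -> 0 < x /\ C j i = Some x^-1).

Definition upleft_sub (T : Type) (n k : nat) (hkn : (k <= n)%N)
    (C : 'M[T]_n) : 'M[T]_k :=
  \matrix_(i < k, j < k) C (widen_ord hkn i) (widen_ord hkn j).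

Definition missing_in_row (R : realFieldType) (k : nat)
    (Ck : 'M[option R]_k) (i : 'I_k) : nat :=
  #|[set j : 'I_k | Ck i j == None]|.

Definition HRE_matrix (R : realFieldType) (n k : nat)
    (Ck : 'M[option R]_k) : 'M[R]_k :=
  \matrix_(i < k, j < k)
    if i == j then n%:R - (missing_in_row Ck i)%:R - 1
    else if Ck i j == None then 0 else -1.

(* A_k is strictly diagonally dominant: in row i the off-diagonal entries of
   absolute value 1 are the known ones, of which there are k - 1 - s_i, while
   A_ii = n - 1 - s_i > k - 1 - s_i because k < n.  A strictly diagonally
   dominant real matrix has trivial kernel: at a coordinate where |w_i| is
   maximal, |A_ii| |w_i| <= sum_(j <> i) |A_ij| |w_i| forces w_i = 0. *)

From HB Require Import structures.
From mathcomp Require Import all_boot all_order all_algebra zify.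
Set Implicit Arguments. Unset Strict Implicit. Unset Printing Implicit Defensive.
Import Order.TTheory GRing.Theory Num.Theory.
Local Open Scope ring_scope.

Definition strictly_diag_dominant (R : numDomainType) (k : nat) (A : 'M[R]_k) :=
  forall i : 'I_k, \sum_(j | j != i) `|A i j| < `|A i i|.

Lemma strictly_diag_dominant_mul_eq0 (R : realDomainType) (k : nat)
    (A : 'M[R]_k) (w : 'cV[R]_k) :
  strictly_diag_dominant A -> A *m w = 0 -> w = 0.
Proof.
move=> hdom hAw; apply/colP => j0; rewrite mxE.
have [i _ wi_max] := @arg_maxP _ R _ j0 xpredT (fun j => `|w j 0|) isT.
set m := `|w i 0| in wi_max.
suff m_le0 : m <= 0.
  by apply/eqP; rewrite -normr_le0 (le_trans (wi_max j0 isT)).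
have row_i : A i i * w i 0 = - \sum_(j | j != i) A i j * w j 0.
  have := congr1 (fun M : 'cV_k => M i 0) hAw; rewrite !mxE (bigD1 i) //=.
  by move/eqP; rewrite addr_eq0 => /eqP.
have offdiag_le : `|A i i| * m <= (\sum_(j | j != i) `|A i j|) * m.
  rewrite /m -normrM row_i normrN mulr_suml.
  apply: le_trans (ler_norm_sum _ _ _) _; apply: ler_sum => j _.
  by rewrite !normrM; apply: ler_wpM2l; [exact: normr_ge0 | exact: wi_max].
have gap_gt0 : 0 < `|A i i| - \sum_(j | j != i) `|A i j| by rewrite subr_gt0.
by rewrite -(pmulr_rle0 _ gap_gt0) mulrBl subr_le0.
Qed.

Lemma strictly_diag_dominant_unitmx (R : realFieldType) (k : nat)
    (A : 'M[R]_k) :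
  strictly_diag_dominant A -> A \in unitmx.
Proof.
move=> hdom; rewrite -unitmx_tr -row_free_unit; apply: inj_row_free => v hv.
apply: trmx_inj; rewrite trmx0; apply: strictly_diag_dominant_mul_eq0 hdom _.
by rewrite -[A]trmxK -trmx_mul hv trmx0.
Qed.

Lemma unitmx_mul_exists_unique (R : comUnitRingType) (k : nat)
    (A : 'M[R]_k) (b : 'cV[R]_k) :
  A \in unitmx -> exists! w : 'cV[R]_k, A *m w = b.
Proof.
move=> hA; exists (invmx A *m b); split; first by rewrite mulmxA mulmxV ?mul1mx.
by move=> w <-; rewrite mulmxA mulVmx ?mul1mx.
Qed.

Section HREMatrix.

Variables (R : realFieldType) (n k : nat) (Ck : 'M[option R]_k).
Hypothesis diag_known : forall i, Ck i i != None.

Lemma known_add_missing_in_row (i : 'I_k) :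
  (\sum_(j | j != i) (Ck i j != None) + missing_in_row Ck i)%N = k.-1.
Proof.
have -> : missing_in_row Ck i = (\sum_(j | j != i) (Ck i j == None : nat))%N.
  rewrite /missing_in_row -sum1dep_card big_mkcond [RHS]big_mkcond /=.
  apply: eq_bigr => j _; case: (eqVneq j i) => [-> | _] /=.
    by rewrite (negbTE (diag_known i)).
  by case: (Ck i j == None).
rewrite -big_split /= -[k in k.-1]card_ord -(cardC1 i) -sum1_card.
by apply: eq_bigr => j _; case: (Ck i j == None).
Qed.

Lemma HRE_matrix_offdiag_norm_sum (i : 'I_k) :
  \sum_(j | j != i) `|HRE_matrix n Ck i j| = (k.-1 - missing_in_row Ck i)%:R.
Proof.
rewrite -(known_add_missing_in_row i) addnK natr_sum.
apply: eq_bigr => j ji; rewrite mxE eq_sym (negbTE ji).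
by case: (Ck i j == None); rewrite ?normr0 ?normrN1.
Qed.

Lemma HRE_matrix_strictly_diag_dominant :
  (k < n)%N -> strictly_diag_dominant (HRE_matrix n Ck).
Proof.
move=> hkn i; rewrite HRE_matrix_offdiag_norm_sum mxE eqxx.
have s_le : (missing_in_row Ck i <= k.-1)%N.
  by rewrite -(known_add_missing_in_row i) leq_addl.
have k_gt0 : (0 < k)%N := leq_ltn_trans (leq0n i) (ltn_ord i).
rewrite -addrA -opprD natr1 -natrB; last by lia.
by rewrite ger0_norm ?ler0n // ltr_nat; lia.
Qed.

End HREMatrix.

Theorem mainTheorem10 (R : realFieldType) (n k : nat)
    (hk1 : (1 <= k)%N) (hkn : (k < n)%N) (C : 'M[option R]_n) :
  is_incomplete_PCM C ->
  let A := HRE_matrix n (upleft_sub (ltnW hkn) C) in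
  A \in unitmx /\ (forall b : 'cV[R]_k, exists! w : 'cV[R]_k, A *m w = b).
Proof.
move=> [diag_one _] A.
have diag_known i : upleft_sub (ltnW hkn) C i i != None.
  by rewrite mxE diag_one.
have A_unit : A \in unitmx.
  exact/strictly_diag_dominant_unitmx/HRE_matrix_strictly_diag_dominant.
by split=> // b; apply: unitmx_mul_exists_unique.
Qed.
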